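(* Let $U\subset\mathbb{C}\setminus\{0\}$ be a connected domain on which an analytic branch of $\ln x$ is fixed, and write $x^{c}=e^{c\ln x}$ for $c\in\mathbb{C}$. Let $f_1,f_2$ be holomorphic and nowhere vanishing on $U$. Then $(f_1,f_2)$ is a nondegenerate period-$2$ orbit of $\mathcal{A}$ (i.e. $\mathcal{A}[f_1]=f_2$, $\mathcal{A}[f_2]=f_1$ and $f_1\not\equiv f_2$) if and only if there exist constants $a,c\in\mathbb{C}\setminus\{0\}$ with $1-ax^{c}\neq 0$ on $U$ such that \[ f_1(x)=\frac{c\,a\,x^{c}}{1-ax^{c}},\qquad f_2(x)=\frac{c}{1-ax^{c}}\qquad (x\in U). \] Moreover, the ordering of the pair is irrelevant: the unordered set $\{f_1,f_2\}$ represents a single $2$-cycle of $\mathcal{A}$.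
   Context: For a complex-differentiable, nowhere-vanishing function $f$ on a domain $U\subset\mathbb{C}\setminus\{0\}$, the dual logarithmic derivative operator is $\mathcal{A}[f](x)=\dfrac{\mathrm{d}\ln f(x)}{\mathrm{d}\ln x}=\dfrac{x f'(x)}{f(x)}$ (for fixed analytic branches of the logarithms). A pair $(f_1,f_2)$ of holomorphic nowhere-vanishing functions on $U$ is a period-$2$ orbit of $\mathcal{A}$ if $\mathcal{A}[f_1]=f_2$ and $\mathcal{A}[f_2]=f_1$; it is nondegenerate if $f_1\not\equiv f_2$. *)

(* MathComp-Analysis over an abstract R : realType;
   the complex plane is R[i] (mathcomp-real-closed), with its modulus
   topology; complex derivatives are MathComp-Analysis derivatives of maps
   CC R -> CC R viewed as a normed module over the field CC R itself. *)
From mathcomp Require Import all_boot all_algebra complex.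
From mathcomp Require Import all_classical all_reals all_analysis.
Import GRing.Theory Num.Theory numFieldNormedType.Exports.
Export numFieldNormedType.Exports.

Set Implicit Arguments.
Unset Strict Implicit.
Unset Printing Implicit Defensive.

Local Open Scope ring_scope.
Local Open Scope classical_set_scope.

Definition CC (R : realType) : numClosedFieldType := R[i].

Definition cexp (R : realType) (z : CC R) : CC R :=
  let: Complex u v := (z : R[i]) in Complex (expR u * cos v) (expR u * sin v).

Definition holomorphic_on (R : realType) (U : set (CC R)) (f : CC R -> CC R) :=
  forall x, U x -> derivable f x 1.

Definition is_domain (R : realType) (U : set (CC R)) :=
  [/\ U !=set0, open U & connected U].

Definition log_branch (R : realType) (U : set (CC R)) (L : CC R -> CC R) :=
  holomorphic_on U L /\ (forall x, U x -> cexp (L x) = x).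

Definition cpow (R : realType) (L : CC R -> CC R) (c x : CC R) : CC R :=
  cexp (c * L x).

Definition dual_logder (R : realType) (f : CC R -> CC R) (x : CC R) : CC R :=
  x * derive1 f x / f x.

Definition period2_orbit (R : realType) (U : set (CC R)) (f1 f2 : CC R -> CC R) :=
  (forall x, U x -> dual_logder f1 x = f2 x) /\
  (forall x, U x -> dual_logder f2 x = f1 x).

Definition nondeg_pair (R : realType) (U : set (CC R)) (f1 f2 : CC R -> CC R) :=
  exists2 x, U x & f1 x != f2 x.

From mathcomp Require Import all_boot all_algebra complex.
From mathcomp Require Import all_classical all_reals all_analysis.
From mathcomp Require Import ring lra.
Import GRing.Theory Num.Theory numFieldNormedType.Exports order.Order.TTheory.
Set Implicit Arguments.
Unset Strict Implicit.
Unset Printing Implicit Defensive.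

Local Open Scope ring_scope.
Local Open Scope classical_set_scope.

(** Since [A[f] = x f' / f], a period-2 orbit means [x f1' = f1 f2 = x f2'].
    Hence [f2 - f1] has zero derivative and is a constant [c], nonzero by
    nondegeneracy, while [q = f1 / f2] satisfies the Euler equation
    [x q' = (f2 - f1) q = c q], so [q = a x^c].  Solving [f1 = a x^c f2] and
    [f2 - f1 = c] gives the formulas; conversely these satisfy
    [x f2' = f1 f2] and [f1 = f2 - c].  The analytic input is that a function
    with zero complex derivative on a domain is constant (mean value theorem
    for its real and imaginary parts along segments, then connectedness) and
    that [cexp' = cexp], which forces [L' = 1/x] and [(x^c)' = c x^c / x]. *)

Section NumFieldDerive.
Context {K : numFieldType}.
Implicit Types (f g : K -> K) (x z d df dg : K).

Lemma is_derive1_normP f z d :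
  is_derive z 1 f d <->
  forall e, 0 < e -> \forall h \near 0, `|f (z + h) - f z - h * d| <= e * `|h|.
Proof.
pose q h := h^-1 *: ((f \o shift z) (h *: 1) - f z).
have qE h : h != 0 -> `|q h - d| = `|f (z + h) - f z - h * d| / `|h|.
  move=> h0; suff -> : q h - d = h^-1 * (f (z + h) - f z - h * d).
    by rewrite normrM normfV mulrC.
  rewrite /q /= [h *: 1]mulr1 (addrC h z).
  by rewrite [in RHS]mulrBr mulKf.
split=> [[/cvg_ex[l ql] dE] e e0 | small].
  have {ql dE} /cvgrPdist_le/(_ e e0) : q @ 0^' --> d.
    by rewrite -dE /derive (cvg_lim _ ql).
  rewrite near_withinE; apply: filter_app; near=> h => qh.
  have [->|h0] := eqVneq h 0; first by rewrite addr0 subrr mul0r subr0 normr0 mulr0.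
  by move: (qh h0); rewrite distrC qE // ler_pdivrMr ?normr_gt0.
have qd : q @ 0^' --> d.
  apply/cvgrPdist_le => e e0; rewrite near_withinE.
  apply: filter_app (small e e0); near=> h => fh h0.
  by rewrite distrC qE // ler_pdivrMr ?normr_gt0.
by apply: DeriveDef; [apply/cvg_ex; exists d | exact: cvg_lim qd].
Unshelve. all: by end_near. Qed.

Lemma is_derive1_chain f g x df dg :
  is_derive x 1 f df -> is_derive (f x) 1 g dg -> is_derive x 1 (g \o f) (dg * df).
Proof.
move=> [/derivable1_diffP dfx dfE] [/derivable1_diffP dgx dgE].
have dgf : differentiable (g \o f) x by exact/differentiable_comp.
apply: DeriveDef; first exact/derivable1_diffP.
rewrite -derive1E derive1E' // diff_comp // -[X in 'd _ _ X = _]mulr1 /=.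
rewrite -derive1E' // derive1E dfE mulr1 -[df in 'd _ _ df]mulr1.
change ('d g (f x) (df *: 1) = dg * df).
by rewrite linearZ /= -derive1E' // derive1E dgE mulrC.
Qed.

Lemma derive1_val f x d : is_derive x 1 f d -> derive1 f x = d.
Proof. by move=> fd; rewrite derive1E derive_val. Qed.

Lemma is_derive1M f g x df dg : is_derive x 1 f df -> is_derive x 1 g dg ->
  is_derive x 1 (fun y => f y * g y) (f x * dg + g x * df).
Proof. exact: is_deriveM. Qed.

Lemma is_derive1B f g x df dg : is_derive x 1 f df -> is_derive x 1 g dg ->
  is_derive x 1 (fun y => f y - g y) (df - dg).
Proof. exact: is_deriveB. Qed.

Lemma is_derive1V f x df : f x != 0 -> is_derive x 1 f df ->
  is_derive x 1 (fun y => (f y)^-1) (- (f x)^-2 * df).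
Proof.
move=> fx0 [fx dfE]; apply: DeriveDef; first exact: derivableV.
by rewrite deriveV // dfE.
Qed.

Lemma is_derive_open_eq (U : set K) f g x d : open U -> U x ->
  (forall y, U y -> g y = f y) -> is_derive x 1 g d -> is_derive x 1 f d.
Proof.
move=> oU Ux gf; apply: near_eq_is_derive.
by apply: filterS (open_nbhs_nbhs (conj oU Ux)) => y /gf.
Qed.

Lemma is_derive1_expmorph (E : K -> K) z :
  {morph E : a b / a + b >-> a * b} -> is_derive (0 : K) 1 E 1 -> is_derive z 1 E (E z).
Proof.
move=> ED E0.
apply: (@near_eq_is_derive _ _ _ (fun y => E z * E (y - z))).
  by near=> y; rewrite -ED addrC subrK.
have dE : is_derive z 1 (E \o shift (- z)) (1 * 1).
  by apply: is_derive1_chain; [exact: is_derive_shift | rewrite /= subrr].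
by apply: is_derive_eq (is_deriveZ (E z) dE) _; rewrite mulr1 [_ *: _]mulr1.
Unshelve. all: by end_near. Qed.

End NumFieldDerive.

(** The real and imaginary parts of [cexp (u +i* v) - 1 - (u +i* v)] are
    [eu * cv - 1 - u] and [eu * sv - v], with [eu, cv, sv] = [expR u, cos v, sin v]. *)
Lemma exp_cos_sin_remainder (R : realFieldType) (e N u v eu cv sv : R) :
  0 < eu -> `|eu - 1| <= 1 -> `|eu - 1| <= e -> `|v| <= N ->
  `|eu - 1 - u| <= e * N -> `|cv - 1| <= e * N -> `|sv - v| <= e * N ->
  `|eu * cv - 1 - u| + `|eu * sv - v| <= 6 * e * N.
Proof.
move=> eu0 eu1 eue vN Eu Cv Sv.
have eu2 : eu <= 2 by move: eu1; rewrite ler_norml; lra.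
have eN0 : 0 <= e * N := le_trans (normr_ge0 _) Eu.
have ReE : eu * cv - 1 - u = (eu - 1 - u) + eu * (cv - 1) by ring.
have ImE : eu * sv - v = eu * (sv - v) + (eu - 1) * v by ring.
have Re_le : `|eu * cv - 1 - u| <= e * N + 2 * (e * N).
  rewrite ReE (le_trans (ler_normD _ _)) // normrM gtr0_norm // lerD //.
  by rewrite ler_pM // ltW.
have Im_le : `|eu * sv - v| <= 2 * (e * N) + e * N.
  rewrite ImE (le_trans (ler_normD _ _)) // !normrM gtr0_norm // lerD //.
    by rewrite ler_pM // ltW.
  exact: ler_pM.
lra.
Qed.

Section ComplexExp.
Context {R : realType}.
Local Open Scope complex_scope.
Implicit Types (z h : CC R).

Lemma normc_ge_Im z : `|complex.Im z|%:C <= `|z|.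
Proof.
rewrite normc_def lecR -sqrtr_sqr ler_sqrt; last by rewrite addr_ge0 ?sqr_ge0.
by rewrite lerDr sqr_ge0.
Qed.

Lemma normc_le_ReIm z : `|z| <= (`|complex.Re z| + `|complex.Im z|)%:C.
Proof.
case: z => a b; rewrite normc_def lecR /=.
rewrite -[X in _ <= X]ger0_norm ?addr_ge0 // -sqrtr_sqr ler_sqrt ?sqr_ge0 //.
rewrite -(real_normK (num_real a)) -(real_normK (num_real b)).
by have := normr_ge0 a; have := normr_ge0 b; nra.
Qed.

Lemma normc_real (r : R) : `|r%:C| = `|r|%:C.
Proof. by rewrite normc_def /= expr0n addr0 sqrtr_sqr. Qed.

Lemma gt0_real_complex z : 0 < z -> exists2 r : R, 0 < r & z = r%:C.
Proof. by case: z => a b; rewrite ltcE /= => /andP[/eqP -> a0]; exists a. Qed.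

Lemma cexpD (a b : CC R) : cexp (a + b) = cexp a * cexp b.
Proof.
case: a => x y; case: b => u v; rewrite /cexp /= expRD cosD sinD.
by apply/eqP; rewrite eq_complex /=; apply/andP; split; apply/eqP; ring.
Qed.

Lemma cexp0 : cexp (0 : CC R) = 1.
Proof. by rewrite /cexp /= expR0 cos0 sin0 mul1r mulr0. Qed.

Lemma cexp_neq0 (a : CC R) : cexp a != 0.
Proof.
apply/eqP => a0; have := cexpD a (- a).
by rewrite subrr cexp0 a0 mul0r; apply/eqP; rewrite oner_eq0.
Qed.

Lemma cexp_remainder_small (e : CC R) : 0 < e ->
  \forall h \near (0 : CC R), `|cexp h - 1 - h| <= e * `|h|.
Proof.
move=> /gt0_real_complex[r r0 ->].
pose eps := Num.min 1 (r / 6).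
have eps0 : 0 < eps by rewrite lt_min ltr01 divr_gt0.
have taylor0 f df : is_derive (0 : R) 1 f df ->
    \forall u \near 0, `|f u - f 0 - u * df| <= eps * `|u|.
  by move=> /is_derive1_normP/(_ eps eps0); apply: filter_app; near=> u; rewrite add0r.
have real_small : \forall u \near (0 : R), [/\ `|expR u - 1| <= eps,
    `|expR u - 1 - u| <= eps * `|u|, `|cos u - 1| <= eps * `|u|
    & `|sin u - u| <= eps * `|u|].
  have /cvgrPdist_le/(_ eps eps0) expR_cont := @continuous_expR R 0.
  near=> u; split.
  - by near: u; apply: filterS expR_cont => u; rewrite expR0 distrC.
  - by near: u; apply: filterS (taylor0 _ _ (is_derive_expR 0)) => u; rewrite expR0 mulr1.
  - near: u; apply: filterS (taylor0 _ _ (is_derive_cos 0)) => u.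
    by rewrite cos0 sin0 oppr0 mulr0 subr0.
  - near: u; apply: filterS (taylor0 _ _ (is_derive_sin 0)) => u.
    by rewrite sin0 cos0 subr0 mulr1.
move/nbhs_norm0P: real_small => [d /= d0 small_d].
apply/(@nbhs_norm0P (CC R) (CC R)); exists d%:C; first by rewrite /= ltcR.
move=> [u v] /= huv.
pose N : R := Num.sqrt (u ^+ 2 + v ^+ 2).
have hN : `|u +i* v| = N%:C by rewrite normc_def.
have uN : `|u| <= N by rewrite -lecR -hN (normc_ge_Re (u +i* v)).
have vN : `|v| <= N by rewrite -lecR -hN (normc_ge_Im (u +i* v)).
have Nd : N < d by rewrite -ltcR -hN.
have [|expu1 Eu _ _] := small_d u; first exact: le_lt_trans uN Nd.
have [|_ _ Cv Sv] := small_d v; first exact: le_lt_trans vN Nd.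
have -> : cexp (u +i* v) - 1 - u +i* v =
    (expR u * cos v - 1 - u) +i* (expR u * sin v - v).
  by apply/eqP; rewrite eq_complex /= subr0 !eqxx.
apply: le_trans (normc_le_ReIm _) _; rewrite hN -rmorphM lecR /=.
have epsN (w : R) : `|w| <= N -> eps * `|w| <= eps * N by rewrite ler_pM2l.
have eps1 : eps <= 1 by rewrite /eps ge_min lexx.
have eps6 : eps <= r / 6 by rewrite /eps ge_min lexx orbT.
apply: le_trans (exp_cos_sin_remainder (expR_gt0 u) (le_trans expu1 eps1) expu1 vN
  (le_trans Eu (epsN _ uN)) (le_trans Cv (epsN _ vN)) (le_trans Sv (epsN _ vN))) _.
have N0 : 0 <= N := sqrtr_ge0 _.
by rewrite -subr_ge0 -mulrBl mulr_ge0 //; lra.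
Unshelve. all: by end_near. Qed.

Lemma is_derive_cexp z : is_derive z 1 (@cexp R) (cexp z).
Proof.
apply: is_derive1_expmorph; first exact: cexpD.
apply/is_derive1_normP => e e0; apply: filterS (cexp_remainder_small e0) => h.
by rewrite add0r cexp0 mulr1.
Qed.

End ComplexExp.

Lemma locally_constant_connected (T : topologicalType) (Y : Type) (U : set T) (w : T -> Y) :
  open U -> connected U -> (forall x, U x -> \forall y \near x, w y = w x) ->
  forall x y, U x -> U y -> w x = w y.
Proof.
move=> oU cU wloc x y Ux Uy.
have open_in_U (P : Y -> Prop) : open [set z | U z /\ P (w z)].
  rewrite openE => z [Uz Pz].
  apply: filterS (filterI (open_nbhs_nbhs (conj oU Uz)) (wloc z Uz)).
  by move=> q [Uq wq]; split; rewrite // wq.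
pose B := [set z | U z /\ w z = w x].
have BU : B = U.
  apply: cU; first by exists x.
    by exists B; [exact: (open_in_U (fun v => v = w x)) | rewrite setIC setIidl // => z []].
  exists (~` [set z | U z /\ w z <> w x]).
    exact/open_closedC/(open_in_U (fun v => v <> w x)).
  apply/seteqP; split=> z; first by move=> [Uz zx]; split=> // -[].
  by move=> [Uz nzx]; split=> //; apply: contrapT => zx; exact: nzx.
by have [] : B y by rewrite BU.
Qed.

Section ZeroDerivative.
Context {R : realType}.
Local Open Scope complex_scope.
Implicit Types (w : CC R -> CC R) (phi : CC R -> R) (x d : CC R).

Lemma is_derive0_along w phi x d (t : R) :
  (forall a b, phi (a - b) = phi a - phi b) -> (forall a, `|phi a|%:C <= `|a|) ->
  is_derive (x + t%:C * d) 1 w 0 -> is_derive t 1 (fun s => phi (w (x + s%:C * d))) 0.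
Proof.
move=> phiB phi_le /is_derive1_normP w0; apply/is_derive1_normP => e e0.
pose nd : R := Num.sqrt (complex.Re d ^+ 2 + complex.Im d ^+ 2).
have nd1 : 0 < nd + 1 by rewrite ltr_wpDl ?sqrtr_ge0.
have /w0/nbhs_norm0P[_ /gt0_real_complex[r r0 ->] small] : 0 < (e / (nd + 1))%:C.
  by rewrite ltcR divr_gt0.
apply/nbhs_norm0P; exists (r / (nd + 1)); first by rewrite /= divr_gt0.
move=> s /= sr; rewrite mulr0 subr0 -phiB.
have sdE : `|s%:C * d| = (`|s| * nd)%:C by rewrite normrM normc_real normc_def -rmorphM.
have /small : `|s%:C * d| < r%:C.
  rewrite sdE ltcR (le_lt_trans _ (_ : `|s| * (nd + 1) < r)) ?ler_wpM2l ?lerDl //.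
  by rewrite -ltr_pdivlMr.
rewrite mulr0 subr0 sdE -rmorphM rmorphD mulrDl addrA => /(le_trans (phi_le _)).
rewrite lecR => /le_trans; apply.
rewrite (_ : e / (nd + 1) * (`|s| * nd) = e * `|s| * (nd / (nd + 1))); last by ring.
have nd_le1 : nd / (nd + 1) <= 1 by rewrite ler_pdivrMr // mul1r lerDl.
by rewrite ler_piMr // mulr_ge0 // ltW.
Qed.

(** Applied with [phi] the real and the imaginary part. *)
Lemma along_segment_eq w phi x d :
  (forall a b, phi (a - b) = phi a - phi b) -> (forall a, `|phi a|%:C <= `|a|) ->
  (forall t : R, 0 <= t <= 1 -> is_derive (x + t%:C * d) 1 w 0) ->
  phi (w (x + d)) = phi (w x).
Proof.
move=> phiB phi_le w0.
pose f s := phi (w (x + s%:C * d)).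
have f0 (t : R) : 0 <= t <= 1 -> is_derive t 1 f 0.
  by move=> t01; exact: is_derive0_along phiB phi_le (w0 t t01).
have f_cont : {within `[0, 1], continuous f}.
  apply: (@derivable_within_continuous R R f `[0, 1]%R) => t; rewrite in_itv /= => t01.
  by case: (f0 t t01).
have f0_oo (t : R) : t \in `]0, 1[%R -> is_derive t 1 f 0.
  by rewrite in_itv /= => /andP[t0 t1]; apply: f0; rewrite !ltW.
have [c _] := @MVT R f (fun=> 0) 0 1 ltr01 f0_oo f_cont.
by rewrite mul0r /f mul1r mul0r addr0 => /eqP; rewrite subr_eq0 => /eqP.
Qed.

Lemma is_derive0_near_const (U : set (CC R)) w x : open U -> U x ->
  (forall y, U y -> is_derive y 1 w 0) -> \forall y \near x, w y = w x.
Proof.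
move=> oU Ux w0.
have /nbhs_normP[r r0 ballU] := open_nbhs_nbhs (conj oU Ux).
apply/nbhs_normP; exists r => // y /= xyr.
have seg t : 0 <= t <= 1 -> is_derive (x + t%:C * (y - x)) 1 w 0.
  move=> /andP[t0 t1]; apply/w0/ballU => /=.
  rewrite opprD addrA subrr sub0r normrN normrM normc_real.
  by apply: le_lt_trans xyr; rewrite distrC ler_piMl // lecR ger0_norm.
have ReB (a b : CC R) : complex.Re (a - b) = complex.Re a - complex.Re b.
  by case: a b => ? ? [? ?].
have ImB (a b : CC R) : complex.Im (a - b) = complex.Im a - complex.Im b.
  by case: a b => ? ? [? ?].
have := along_segment_eq ReB (@normc_ge_Re R) seg.
have := along_segment_eq ImB normc_ge_Im seg.
by rewrite addrC subrK; case: (w y) (w x) => ? ? [? ?] /= -> ->.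
Qed.

Lemma is_derive0_constant (U : set (CC R)) w : open U -> connected U ->
  (forall y, U y -> is_derive y 1 w 0) -> forall x y, U x -> U y -> w x = w y.
Proof.
move=> oU cU w0; apply: locally_constant_connected => // x Ux.
exact: is_derive0_near_const.
Qed.

End ZeroDerivative.

Section DualLogDerivative.
Context {R : realType}.
Implicit Types (f g : CC R -> CC R) (x : CC R).

Lemma is_derive_dual_logder f x : x != 0 -> f x != 0 -> derivable f x 1 ->
  is_derive x 1 f (f x * dual_logder f x / x).
Proof.
move=> x0 fx0 /derivableP; rewrite -derive1E => df.
by apply: is_derive_eq df _; rewrite /dual_logder; field; rewrite x0 fx0.
Qed.

Lemma dual_logder_is_derive f g x : x != 0 -> f x != 0 ->
  is_derive x 1 f (f x * g x / x) -> dual_logder f x = g x.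
Proof.
by move=> x0 fx0 /derive1_val df; rewrite /dual_logder df; field; rewrite x0 fx0.
Qed.

End DualLogDerivative.

Lemma cpow_neq0 (R : realType) (L : CC R -> CC R) c x : cpow L c x != 0.
Proof. exact: cexp_neq0. Qed.

Section LogBranch.
Context {R : realType}.
Variables (U : set (CC R)) (L : CC R -> CC R).
Hypotheses (oU : open U) (cU : connected U) (logL : log_branch U L).
Implicit Types (f q : CC R -> CC R) (a c x : CC R).

Lemma log_branch_neq0 x : U x -> x != 0.
Proof. by move=> Ux; rewrite -(logL.2 x Ux) cexp_neq0. Qed.

Lemma holomorphic_is_derive f x : holomorphic_on U f -> U x ->
  is_derive x 1 f (derive1 f x).
Proof. by move=> hf Ux; rewrite derive1E; apply/derivableP/hf. Qed.

Lemma is_derive_log_branch x : U x -> is_derive x 1 L x^-1.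
Proof.
move=> Ux; have dL := holomorphic_is_derive logL.1 Ux.
have dexpL : is_derive x 1 (@cexp R \o L) 1.
  by apply: is_derive_open_eq oU Ux (fun y Uy => esym (logL.2 y Uy)) (is_derive_id _ _).
have [_] := is_derive1_chain dL (is_derive_cexp (L x)).
case: dexpL => _ ->; rewrite logL.2 // => xL.
by apply: is_derive_eq dL _; rewrite -[x^-1]mulr1 xL mulKf ?log_branch_neq0.
Qed.

Lemma is_derive_cpow c x : U x -> is_derive x 1 (cpow L c) (c / x * cpow L c x).
Proof.
move=> Ux; have dcL := is_deriveZ c (is_derive_log_branch Ux).
by apply: is_derive_eq (is_derive1_chain dcL (is_derive_cexp _)) _; rewrite mulrC.
Qed.

Lemma euler_solution_cpow q c x0 :
  (forall x, U x -> is_derive x 1 q (c * q x / x)) -> U x0 ->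
  forall x, U x -> q x = q x0 / cpow L c x0 * cpow L c x.
Proof.
move=> dq Ux0.
pose w y := q y * (cpow L c y)^-1.
have w0 y : U y -> is_derive y 1 w 0.
  move=> Uy; have dP := is_derive1V (cpow_neq0 L c y) (is_derive_cpow c Uy).
  apply: is_derive_eq (is_derive1M (dq y Uy) dP) _.
  by field; rewrite cpow_neq0 log_branch_neq0.
move=> x Ux; have := is_derive0_constant oU cU w0 Ux0 Ux.
by rewrite /w => ->; rewrite mulfVK ?cpow_neq0.
Qed.

Lemma period2_orbit_cpow f1 f2 :
  holomorphic_on U f1 -> holomorphic_on U f2 ->
  (forall x, U x -> f1 x != 0) -> (forall x, U x -> f2 x != 0) ->
  period2_orbit U f1 f2 -> nondeg_pair U f1 f2 ->
  exists a c, [/\ a != 0, c != 0, (forall x, U x -> 1 - a * cpow L c x != 0) &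
    (forall x, U x -> f1 x = c * a * cpow L c x / (1 - a * cpow L c x) /\
                      f2 x = c / (1 - a * cpow L c x))].
Proof.
move=> h1 h2 n1 n2 [A1 A2] [x0 Ux0 f12].
have d1 x : U x -> is_derive x 1 f1 (f1 x * f2 x / x).
  move=> Ux; have := is_derive_dual_logder (log_branch_neq0 Ux) (n1 x Ux) (h1 x Ux).
  by rewrite A1.
have d2 x : U x -> is_derive x 1 f2 (f1 x * f2 x / x).
  move=> Ux; have := is_derive_dual_logder (log_branch_neq0 Ux) (n2 x Ux) (h2 x Ux).
  by rewrite A2 // [f2 x * _]mulrC.
pose c := f2 x0 - f1 x0.
have c0 : c != 0 by rewrite subr_eq0 eq_sym.
have f21E x : U x -> f2 x - f1 x = c.
  move=> Ux; apply: (is_derive0_constant (w := fun y => f2 y - f1 y) oU cU) Ux Ux0 => y Uy.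
  by apply: is_derive_eq (is_deriveB (d2 y Uy) (d1 y Uy)) _; rewrite subrr.
pose q x := f1 x * (f2 x)^-1.
have dq x : U x -> is_derive x 1 q (c * q x / x).
  move=> Ux; have := is_derive1M (d1 x Ux) (is_derive1V (n2 x Ux) (d2 x Ux)).
  move/is_derive_eq; apply; rewrite -(f21E x Ux) /q.
  by field; rewrite log_branch_neq0 ?n2.
have qP := euler_solution_cpow dq Ux0.
set a := q x0 / cpow L c x0 in qP.
have a0 : a != 0 by rewrite !mulf_neq0 ?invr_neq0 ?cpow_neq0 ?n1 ?n2.
have f2E x : U x -> (1 - a * cpow L c x) * f2 x = c.
  move=> Ux; rewrite -[RHS](f21E x Ux) -(qP x Ux) /q.
  by field; rewrite n2.
have g0 x : U x -> 1 - a * cpow L c x != 0.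
  by move=> Ux; apply: contra_neq c0 => g0; rewrite -(f2E x Ux) g0 mul0r.
exists a, c; split=> // x Ux.
have f2x : f2 x = c / (1 - a * cpow L c x).
  by rewrite -[X in X / _](f2E x Ux) mulrC mulKf ?g0.
have f1x : f1 x = f2 x - c by rewrite -(f21E x Ux) opprB addrC subrK.
by split=> //; rewrite f1x f2x; field; rewrite g0.
Qed.

Lemma cpow_period2_orbit f1 f2 a c : U !=set0 -> a != 0 -> c != 0 ->
  (forall x, U x -> 1 - a * cpow L c x != 0) ->
  (forall x, U x -> f1 x = c * a * cpow L c x / (1 - a * cpow L c x) /\
                    f2 x = c / (1 - a * cpow L c x)) ->
  period2_orbit U f1 f2 /\ nondeg_pair U f1 f2.
Proof.
move=> [x0 Ux0] a0 c0 g0 fE.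
have f1E x : U x -> f1 x = f2 x - c.
  by move=> Ux; case: (fE x Ux) => -> ->; field; rewrite g0.
have n1 x : U x -> f1 x != 0.
  by move=> Ux; rewrite (fE x Ux).1 !mulf_neq0 ?invr_neq0 ?cpow_neq0 ?g0.
have n2 x : U x -> f2 x != 0.
  by move=> Ux; rewrite (fE x Ux).2 mulf_neq0 ?invr_neq0 ?g0.
have d2 x : U x -> is_derive x 1 f2 (f1 x * f2 x / x).
  move=> Ux; have dP := is_derive1M (is_derive_cst a x 1) (is_derive_cpow c Ux).
  have dg := is_derive1B (is_derive_cst (1 : CC R) x 1) dP.
  have dV := is_derive1V (f := fun y => 1 - a * cpow L c y) (g0 x Ux) dg.
  have := is_derive1M (is_derive_cst c x 1) dV.
  move/(is_derive_open_eq oU Ux (fun y Uy => esym (fE y Uy).2))/is_derive_eq; apply.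
  by case: (fE x Ux) => -> ->; rewrite /cst; field; rewrite g0 ?log_branch_neq0.
have d1 x : U x -> is_derive x 1 f1 (f1 x * f2 x / x).
  move=> Ux; have := is_deriveB (d2 x Ux) (is_derive_cst c x 1).
  move/(is_derive_open_eq oU Ux (fun y Uy => esym (f1E y Uy)))/is_derive_eq.
  by apply; rewrite subr0.
split; [split=> x Ux | exists x0 => //].
- exact: dual_logder_is_derive (log_branch_neq0 Ux) (n1 x Ux) (d1 x Ux).
- apply: (dual_logder_is_derive (log_branch_neq0 Ux) (n2 x Ux)).
  by rewrite [f2 x * _]mulrC; exact: d2.
- by rewrite f1E // -subr_eq0 addrAC subrr sub0r oppr_eq0.
Qed.

End LogBranch.

Theorem theorem4p2 (R : realType) (U : set (CC R)) (L : CC R -> CC R)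
    (f1 f2 : CC R -> CC R) :
  is_domain U -> (forall x, U x -> x != 0) -> log_branch U L ->
  holomorphic_on U f1 -> holomorphic_on U f2 ->
  (forall x, U x -> f1 x != 0) -> (forall x, U x -> f2 x != 0) ->
  ((period2_orbit U f1 f2 /\ nondeg_pair U f1 f2) <->
    exists a c : CC R, [/\ a != 0, c != 0,
      (forall x, U x -> 1 - a * cpow L c x != 0) &
      (forall x, U x ->
         f1 x = c * a * cpow L c x / (1 - a * cpow L c x) /\
         f2 x = c / (1 - a * cpow L c x))])
  /\
  ((period2_orbit U f1 f2 /\ nondeg_pair U f1 f2) <->
   (period2_orbit U f2 f1 /\ nondeg_pair U f2 f1)).
Proof.
move=> [U0 oU cU] _ logL h1 h2 n1 n2; split.
  split=> [[orbit nd] | [a [c [a0 c0 g0 fE]]]].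
    exact (period2_orbit_cpow oU cU logL h1 h2 n1 n2 orbit nd).
  exact (cpow_period2_orbit oU logL U0 a0 c0 g0 fE).
by split=> -[[A1 A2] [x Ux f12]]; split=> //; exists x; rewrite // eq_sym.
Qed.
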